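(* Let $(X,d)$ be a complete metric space, let $N\in\mathbb{N}\setminus\{0\}$, let $\alpha:X\times X\rightarrow[0,+\infty)$ be $N$--transitive, and let $T:X\rightarrow X$ be an $\alpha$--contractive mapping of Meir--Keeler type satisfying: (A1) $T$ is $\alpha$--admissible; (A2) there exists $x_{0}\in X$ such that $\alpha(x_{0},Tx_{0})\geq1$; (A4) $(X,d)$ is $(T,\alpha)$--regular. Then $T$ has a fixed point.
   Context: $\mathbb{N}$ is the set of non-negative integers; $T^n$ is the $n$-th iterate of $T$. $T$ is an $\alpha$--contractive mapping of Meir--Keeler type if for every $\varepsilon>0$ there exists $\delta(\varepsilon)>0$ such that for all $x,y\in X$: $\varepsilon\leq d(x,y)<\varepsilon+\delta(\varepsilon)$ implies $\alpha(x,y)d(Tx,Ty)<\varepsilon$. $T$ is $\alpha$--admissible if $\alpha(x,y)\geq1$ implies $\alpha(Tx,Ty)\geq1$. $\alpha$ is $N$--transitive if for all $x_0,\dots,x_{N+1}\in X$ with $\alpha(x_i,x_{i+1})\geq1$ for all $i\in\{0,\dots,N\}$ one has $\alpha(x_0,x_{N+1})\geq1$. A sequence $\{x_n\}$ is $(T,\alpha)$--orbital if $x_n=T^nx_0$ and $\alpha(x_n,x_{n+1})\geq1$ for all $n\in\mathbb{N}$. $(X,d)$ is $(T,\alpha)$--regular if for every $(T,\alpha)$--orbital sequence $\{x_n\}$ with $x_n\rightarrow x\in X$ there exists a subsequence $\{x_{n(k)}\}$ with $\alpha(x_{n(k)},x)\geq1$ for all $k$. *)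

From Stdlib Require Export Reals.
Open Scope R_scope.

Definition is_metric {X : Type} (d : X -> X -> R) : Prop :=
  (forall x y, 0 <= d x y) /\
  (forall x y, d x y = 0 <-> x = y) /\
  (forall x y, d x y = d y x) /\
  (forall x y z, d x z <= d x y + d y z).

Definition seq_converges {X : Type} (d : X -> X -> R) (u : nat -> X) (x : X) : Prop :=
  forall eps, 0 < eps -> exists n0 : nat, forall n, (n0 <= n)%nat -> d (u n) x < eps.

Definition cauchy_seq {X : Type} (d : X -> X -> R) (u : nat -> X) : Prop :=
  forall eps, 0 < eps -> exists n0 : nat,
    forall m n, (n0 <= m)%nat -> (n0 <= n)%nat -> d (u m) (u n) < eps.

Definition complete_metric {X : Type} (d : X -> X -> R) : Prop :=
  forall u : nat -> X, cauchy_seq d u -> exists x, seq_converges d u x.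

Definition alpha_MK_contractive {X : Type} (d : X -> X -> R) (alpha : X -> X -> R)
  (T : X -> X) : Prop :=
  forall eps, 0 < eps -> exists delta, 0 < delta /\
    forall x y, eps <= d x y -> d x y < eps + delta -> alpha x y * d (T x) (T y) < eps.

Definition alpha_admissible {X : Type} (alpha : X -> X -> R) (T : X -> X) : Prop :=
  forall x y, 1 <= alpha x y -> 1 <= alpha (T x) (T y).

(* N-transitivity: points x_0,...,x_{N+1} given as x 0, ..., x (N+1) *)
Definition N_transitive {X : Type} (N : nat) (alpha : X -> X -> R) : Prop :=
  forall x : nat -> X,
    (forall i, (i <= N)%nat -> 1 <= alpha (x i) (x (S i))) ->
    1 <= alpha (x 0%nat) (x (S N)).

Definition T_alpha_orbital {X : Type} (alpha : X -> X -> R) (T : X -> X) (x0 : X) : Prop :=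
  forall n : nat, 1 <= alpha (Nat.iter n T x0) (Nat.iter (S n) T x0).

Definition T_alpha_regular {X : Type} (d : X -> X -> R) (alpha : X -> X -> R)
  (T : X -> X) : Prop :=
  forall x0 x : X,
    T_alpha_orbital alpha T x0 ->
    seq_converges d (fun n => Nat.iter n T x0) x ->
    exists phi : nat -> nat, (forall k, (phi k < phi (S k))%nat) /\
      forall k, 1 <= alpha (Nat.iter (phi k) T x0) x.

(* Admissibility propagates [alpha >= 1] along the Picard orbit x_n = T^n x0,
   and on pairs with [alpha >= 1] the Meir-Keeler condition makes T
   nonexpansive; hence the consecutive distances d(x_n, x_{n+1}) decrease, and
   the Meir-Keeler condition at their limit forces that limit to be 0.
   N-transitivity yields alpha(x_n, x_{n+jN+1}) >= 1, so by induction on j the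
   Meir-Keeler condition keeps d(x_n, x_{n+jN+1}) below eps + N e once the
   consecutive distances are below e; the remaining < N steps cost at most N e
   more, so the orbit is Cauchy.  Regularity provides a subsequence
   alpha-related to the limit, along which nonexpansiveness carries T through
   the limit. *)

From Stdlib Require Import Reals Lra Lia Psatz.
Open Scope R_scope.

Section Metric.

Variables (X : Type) (d : X -> X -> R).
Hypothesis d_metric : is_metric d.

Lemma dist_nonneg x y : 0 <= d x y.
Proof. apply d_metric. Qed.

Lemma dist_refl x : d x x = 0.
Proof. apply d_metric; reflexivity. Qed.

Lemma dist_sym x y : d x y = d y x.
Proof. apply d_metric. Qed.

Lemma dist_triangle x y z : d x z <= d x y + d y z.
Proof. apply d_metric. Qed.

Lemma dist_arbitrarily_small_eq x y :
  (forall eps, 0 < eps -> d x y < eps) -> x = y.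
Proof.
  intros Hsmall. apply d_metric.
  destruct (Rle_lt_dec (d x y) 0) as [Hle | Hpos].
  - pose proof (dist_nonneg x y); lra.
  - specialize (Hsmall _ Hpos); lra.
Qed.

Lemma dist_le_steps (u : nat -> X) (e : R) (m k : nat) :
  (forall i, (m <= i)%nat -> d (u i) (u (S i)) < e) ->
  d (u m) (u (m + k)%nat) <= INR k * e.
Proof.
  intros Hsteps. induction k as [|k IHk].
  - rewrite Nat.add_0_r, dist_refl. simpl; lra.
  - replace (m + S k)%nat with (S (m + k)) by lia. rewrite S_INR.
    pose proof (dist_triangle (u m) (u (m + k)%nat) (u (S (m + k)))).
    pose proof (Hsteps (m + k)%nat ltac:(lia)). lra.
Qed.

Section MeirKeeler.

Variables (alpha : X -> X -> R) (T : X -> X).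
Hypothesis T_MK : alpha_MK_contractive d alpha T.

Lemma MK_nonexpansive x y : 1 <= alpha x y -> d (T x) (T y) <= d x y.
Proof.
  intros Halpha.
  destruct (Req_dec (d x y) 0) as [H0 | H0].
  - apply d_metric in H0. subst y. rewrite !dist_refl. lra.
  - assert (Hpos : 0 < d x y) by (pose proof (dist_nonneg x y); lra).
    destruct (T_MK (d x y) Hpos) as [delta [Hdelta HMK]].
    specialize (HMK x y (Rle_refl _) ltac:(lra)).
    pose proof (dist_nonneg (T x) (T y)). nra.
Qed.

Lemma MK_dist_lt (eps delta : R) x y :
  (forall x y, eps <= d x y -> d x y < eps + delta ->
     alpha x y * d (T x) (T y) < eps) ->
  1 <= alpha x y -> d x y < eps + delta -> d (T x) (T y) < eps.
Proof.
  intros HMK Halpha Hnear.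
  destruct (Rle_lt_dec eps (d x y)) as [Hfar | Hclose].
  - specialize (HMK x y Hfar Hnear).
    pose proof (dist_nonneg (T x) (T y)). nra.
  - pose proof (MK_nonexpansive x y Halpha). lra.
Qed.

Section Orbit.

Variable x0 : X.
Hypothesis T_admissible : alpha_admissible alpha T.
Hypothesis x0_alpha : 1 <= alpha x0 (T x0).

Definition orbit (n : nat) : X := Nat.iter n T x0.

Lemma orbit_S n : orbit (S n) = T (orbit n).
Proof. reflexivity. Qed.

Lemma orbit_orbital : T_alpha_orbital alpha T x0.
Proof.
  intro n. induction n as [|n IHn]; [exact x0_alpha|].
  apply T_admissible. exact IHn.
Qed.

Lemma orbit_alpha_jump (N : nat) :
  N_transitive N alpha ->
  forall n j, 1 <= alpha (orbit n) (orbit (n + j * N + 1)%nat).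
Proof.
  intros Htrans n j. induction j as [|j IHj].
  - replace (n + 0 * N + 1)%nat with (S n) by lia. apply orbit_orbital.
  - (* chain x_n, x_{n+jN+1}, ..., x_{n+jN+N+1} of length N + 2 *)
    pose (chain i := match i with
                     | O => orbit n
                     | S _ => orbit (n + j * N + i)%nat
                     end).
    replace (orbit (n + S j * N + 1)%nat) with (chain (S N))
      by (simpl; f_equal; lia).
    apply (Htrans chain). intros [|i] Hi; [exact IHj|].
    simpl. replace (n + j * N + S (S i))%nat with (S (n + j * N + S i))
      by lia.
    apply orbit_orbital.
Qed.

Lemma orbit_step_eventually_lt e :
  0 < e -> exists n0, forall n, (n0 <= n)%nat -> d (orbit n) (orbit (S n)) < e.
Proof.
  intros He.
  set (step n := d (orbit n) (orbit (S n))).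
  assert (Hdec : Un_decreasing step).
  { intro n. apply MK_nonexpansive, orbit_orbital. }
  assert (Hlb : has_lb step).
  { exists 0. intros z [i ->]. unfold opp_seq, step.
    pose proof (dist_nonneg (orbit i) (orbit (S i))). lra. }
  destruct (decreasing_cv step Hdec Hlb) as [r Hr].
  pose proof (decreasing_ineq step r Hdec Hr) as Hge.
  (* a positive limit r is contradicted by Meir-Keeler at r: once a distance
     lies in [r, r + delta), the next one falls below r *)
  assert (Hr0 : r <= 0).
  { destruct (Rle_lt_dec r 0) as [|Hrpos]; [assumption|].
    destruct (T_MK r Hrpos) as [delta [Hdelta HMK]].
    destruct (Hr delta Hdelta) as [M HM]. specialize (HM M (le_n M)).
    unfold Rdist in HM. apply Rabs_def2 in HM.
    pose proof (MK_dist_lt r delta (orbit M) (orbit (S M)) HMK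
                  (orbit_orbital M) ltac:(unfold step in HM; lra)) as Hnext.
    rewrite <- !orbit_S in Hnext.
    specialize (Hge (S M)). unfold step in Hge. lra. }
  destruct (Hr e He) as [n0 Hn0]. exists n0. intros n Hn.
  specialize (Hn0 n Hn). unfold Rdist in Hn0. apply Rabs_def2 in Hn0.
  fold (step n). lra.
Qed.

Lemma orbit_jump_dist_lt (N : nat) (eps delta e : R) (n0 : nat) :
  (1 <= N)%nat -> N_transitive N alpha ->
  (forall x y, eps <= d x y -> d x y < eps + delta ->
     alpha x y * d (T x) (T y) < eps) ->
  0 <= eps -> INR N * e <= delta ->
  (forall n, (n0 <= n)%nat -> d (orbit n) (orbit (S n)) < e) ->
  forall n j, (n0 <= n)%nat ->
    d (orbit n) (orbit (n + j * N + 1)%nat) < eps + INR N * e.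
Proof.
  intros HN Htrans HMK Heps HNe Hsteps n j Hn.
  assert (HN1 : 1 <= INR N) by (apply (le_INR 1); lia).
  pose proof (Hsteps n Hn) as Hstep_n.
  assert (He : 0 <= e) by (pose proof (dist_nonneg (orbit n) (orbit (S n))); lra).
  induction j as [|j IHj].
  - replace (n + 0 * N + 1)%nat with (S n) by lia. nra.
  - set (m := (n + j * N + 1)%nat) in *.
    (* one contraction step from the pair (x_n, x_m), then N - 1 small steps *)
    assert (Hcontract : d (orbit (S n)) (orbit (S m)) < eps)
      by exact (MK_dist_lt eps delta (orbit n) (orbit m) HMK
                  (orbit_alpha_jump N Htrans n j) ltac:(lra)).
    pose proof (dist_le_steps orbit e (S m) (N - 1) ltac:(intros i Hi; apply Hsteps; lia))
      as Htail.
    replace (S m + (N - 1))%nat with (n + S j * N + 1)%nat in Htail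
      by (unfold m; lia).
    rewrite minus_INR in Htail by lia. simpl INR in Htail.
    pose proof (dist_triangle (orbit n) (orbit (S n)) (orbit (n + S j * N + 1)%nat)).
    pose proof (dist_triangle (orbit (S n)) (orbit (S m)) (orbit (n + S j * N + 1)%nat)).
    lra.
Qed.

Lemma orbit_cauchy (N : nat) :
  (1 <= N)%nat -> N_transitive N alpha -> cauchy_seq d orbit.
Proof.
  intros HN Htrans eps0 Heps0.
  set (eps := eps0 / 2).
  destruct (T_MK eps ltac:(unfold eps; lra)) as [delta [Hdelta HMK]].
  assert (HNpos : 0 < INR N) by (apply lt_0_INR; lia).
  set (e := Rmin delta eps / (2 * INR N)).
  assert (He : 0 < e).
  { apply Rdiv_lt_0_compat; [apply Rmin_glb_lt; unfold eps|]; lra. }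
  assert (HNe : 2 * (INR N * e) = Rmin delta eps) by (unfold e; field; lra).
  pose proof (Rmin_l delta eps). pose proof (Rmin_r delta eps).
  destruct (orbit_step_eventually_lt e He) as [n0 Hsteps].
  assert (Hforward : forall n m, (n0 <= n)%nat -> (n <= m)%nat ->
                       d (orbit n) (orbit m) < eps0).
  { intros n m Hn Hnm.
    destruct (Nat.eq_dec n m) as [<- | Hne]; [rewrite dist_refl; lra|].
    (* write m = n + j N + 1 + r with r < N *)
    pose proof (Nat.div_mod (m - n - 1) N ltac:(lia)) as Hdiv.
    pose proof (Nat.mod_upper_bound (m - n - 1) N ltac:(lia)) as Hrem.
    set (j := ((m - n - 1) / N)%nat) in *. set (r := ((m - n - 1) mod N)%nat) in *.
    pose proof (orbit_jump_dist_lt N eps delta e n0 HN Htrans HMK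
                  ltac:(unfold eps; lra) ltac:(lra) Hsteps n j Hn) as Hjump.
    pose proof (dist_le_steps orbit e (n + j * N + 1) r
                  ltac:(intros i Hi; apply Hsteps; lia)) as Htail.
    replace (n + j * N + 1 + r)%nat with m in Htail by lia.
    assert (INR r * e <= INR N * e)
      by (apply Rmult_le_compat_r; [lra | apply le_INR; lia]).
    pose proof (dist_triangle (orbit n) (orbit (n + j * N + 1)%nat) (orbit m)).
    unfold eps in *. lra. }
  exists n0. intros m n Hm Hn.
  destruct (Nat.le_ge_cases n m).
  - rewrite dist_sym. apply Hforward; assumption.
  - apply Hforward; assumption.
Qed.

Lemma orbit_limit_fixed (xl : X) (phi : nat -> nat) :
  seq_converges d orbit xl ->
  (forall k, (phi k < phi (S k))%nat) ->
  (forall k, 1 <= alpha (orbit (phi k)) xl) ->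
  T xl = xl.
Proof.
  intros Hlim Hphi Hphi_alpha.
  assert (Hphi_ge : forall k, (k <= phi k)%nat).
  { intro k. induction k as [|k IHk]; [lia|]. specialize (Hphi k). lia. }
  symmetry. apply dist_arbitrarily_small_eq. intros eps Heps.
  destruct (Hlim (eps / 2) ltac:(lra)) as [n0 Hn0].
  set (k := phi n0).
  pose proof (Hn0 k (Hphi_ge n0)).
  pose proof (Hn0 (S k) ltac:(pose proof (Hphi_ge n0); unfold k; lia)).
  pose proof (MK_nonexpansive _ _ (Hphi_alpha n0)) as Hnonexp.
  fold k in Hnonexp. rewrite <- orbit_S in Hnonexp.
  pose proof (dist_triangle xl (orbit (S k)) (T xl)).
  pose proof (dist_sym xl (orbit (S k))).
  lra.
Qed.

End Orbit.

End MeirKeeler.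

End Metric.

Theorem theorem3 (X : Type) (d : X -> X -> R) (N : nat) (alpha : X -> X -> R) (T : X -> X) :
  is_metric d ->
  complete_metric d ->
  (1 <= N)%nat ->
  (forall x y, 0 <= alpha x y) ->
  N_transitive N alpha ->
  alpha_MK_contractive d alpha T ->
  alpha_admissible alpha T ->
  (exists x0, 1 <= alpha x0 (T x0)) ->
  T_alpha_regular d alpha T ->
  exists x, T x = x.
Proof.
  intros Hmetric Hcomplete HN _ Htrans HMK Hadm [x0 Hx0] Hreg.
  destruct (Hcomplete (orbit X T x0)
              (orbit_cauchy X d Hmetric alpha T HMK x0 Hadm Hx0 N HN Htrans))
    as [xl Hlim].
  destruct (Hreg x0 xl (orbit_orbital X alpha T x0 Hadm Hx0) Hlim)
    as [phi [Hphi Hphi_alpha]].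
  exists xl.
  exact (orbit_limit_fixed X d Hmetric alpha T HMK x0 xl phi Hlim Hphi Hphi_alpha).
Qed.
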